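(* $\mathcal{B}_f(H)$ is not Polishable in either the norm topology or the strong operator topology; that is, there is no Polish group topology on the additive group $\mathcal{B}_f(H)$ whose Borel sets coincide with the Borel sets induced on $\mathcal{B}_f(H)$ by the operator norm topology, nor one whose Borel sets coincide with those induced by the strong operator topology.
   Context: $H$ is a fixed infinite-dimensional separable complex Hilbert space, $\mathcal{B}(H)$ its bounded operators, and $\mathcal{B}_f(H)$ the finite-rank operators. The strong operator topology is the topology of pointwise norm convergence on $H$. *)

From Stdlib Require Import Reals List.
Set Implicit Arguments.
Open Scope R_scope.

Record C := mkC { Cre : R; Cim : R }.
Definition C0 : C := mkC 0 0.
Definition C1 : C := mkC 1 0.
Definition Cadd (a b : C) : C := mkC (Cre a + Cre b) (Cim a + Cim b).
Definition Cmul (a b : C) : C :=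
  mkC (Cre a * Cre b - Cim a * Cim b) (Cre a * Cim b + Cim a * Cre b).
Definition Cconj (a : C) : C := mkC (Cre a) (- Cim a).

Record PreHilbert := {
  hcar :> Type;
  hadd : hcar -> hcar -> hcar;
  hzero : hcar;
  hopp : hcar -> hcar;
  hscal : C -> hcar -> hcar;
  hinner : hcar -> hcar -> C }.

Arguments hadd {p}. Arguments hzero {p}. Arguments hopp {p}.
Arguments hscal {p}. Arguments hinner {p}.

Section HilbertDefs.
Variable H : PreHilbert.

Definition hsub (x y : H) : H := hadd x (hopp y).
Definition hnorm (x : H) : R := sqrt (Cre (hinner x x)).

Fixpoint lincomb (cs : list C) (vs : list H) : H :=
  match cs, vs with
  | c :: cs', v :: vs' => hadd (hscal c v) (lincomb cs' vs')
  | _, _ => hzero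
  end.

Definition in_span (vs : list H) (x : H) : Prop := exists cs, x = lincomb cs vs.

Definition is_inf_dim_sep_Hilbert : Prop :=
  (forall x y z : H, hadd x (hadd y z) = hadd (hadd x y) z) /\
  (forall x y : H, hadd x y = hadd y x) /\
  (forall x : H, hadd x hzero = x) /\
  (forall x : H, hadd x (hopp x) = hzero) /\
  (forall x : H, hscal C1 x = x) /\
  (forall a b (x : H), hscal (Cmul a b) x = hscal a (hscal b x)) /\
  (forall a (x y : H), hscal a (hadd x y) = hadd (hscal a x) (hscal a y)) /\
  (forall a b (x : H), hscal (Cadd a b) x = hadd (hscal a x) (hscal b x)) /\
  (* inner product, linear in the first variable *)
  (forall x y z : H, hinner (hadd x y) z = Cadd (hinner x z) (hinner y z)) /\
  (forall a (x y : H), hinner (hscal a x) y = Cmul a (hinner x y)) /\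
  (forall x y : H, hinner y x = Cconj (hinner x y)) /\
  (forall x : H, 0 <= Cre (hinner x x)) /\
  (forall x : H, hinner x x = C0 -> x = hzero) /\
  (forall u : nat -> H,
      (forall eps, eps > 0 -> exists N, forall m n, (N <= m)%nat -> (N <= n)%nat ->
          hnorm (hsub (u m) (u n)) < eps) ->
      exists l : H, forall eps, eps > 0 -> exists N, forall n, (N <= n)%nat ->
          hnorm (hsub (u n) l) < eps) /\
  (exists d : nat -> H, forall x eps, eps > 0 -> exists n, hnorm (hsub x (d n)) < eps) /\
  (forall vs : list H, exists x, ~ in_span vs x).

Definition op_add (S T : H -> H) : H -> H := fun x => hadd (S x) (T x).
Definition op_opp (S : H -> H) : H -> H := fun x => hopp (S x).

Definition is_linear (T : H -> H) : Prop :=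
  (forall x y, T (hadd x y) = hadd (T x) (T y)) /\
  (forall a x, T (hscal a x) = hscal a (T x)).

Definition is_bounded_op (T : H -> H) : Prop :=
  is_linear T /\ exists M, forall x, hnorm (T x) <= M * hnorm x.

Definition is_finite_rank (T : H -> H) : Prop :=
  is_bounded_op T /\ exists vs : list H, forall x, in_span vs (T x).

(** Operator-norm topology on B(H): U is open iff it contains, around each
    of its points T, a ball { S | ||S - T|| <= eps }. *)
Definition norm_open (U : (H -> H) -> Prop) : Prop :=
  (forall T, U T -> is_bounded_op T) /\
  (forall T, U T -> exists eps, eps > 0 /\
     forall S, is_bounded_op S ->
       (forall x, hnorm (hsub (S x) (T x)) <= eps * hnorm x) -> U S).

Definition sot_open (U : (H -> H) -> Prop) : Prop :=
  (forall T, U T -> is_bounded_op T) /\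
  (forall T, U T -> exists (xs : list H) eps, eps > 0 /\
     forall S, is_bounded_op S ->
       (forall x, In x xs -> hnorm (hsub (S x) (T x)) < eps) -> U S).

End HilbertDefs.

(** * General topology relative to a carrier subset S of a type X *)
Section Topo.
Variable X : Type.

Definition subset (A B : X -> Prop) : Prop := forall x, A x -> B x.

Definition is_topology_on (S : X -> Prop) (op : (X -> Prop) -> Prop) : Prop :=
  (forall U, op U -> subset U S) /\
  op S /\
  (forall U V, op U -> op V -> op (fun x => U x /\ V x)) /\
  (forall F : (X -> Prop) -> Prop, (forall U, F U -> op U) ->
     op (fun x => exists U, F U /\ U x)).

Definition sigma_algebra_on (S : X -> Prop) (Sg : (X -> Prop) -> Prop) : Prop :=
  (forall A, Sg A -> subset A S) /\
  Sg S /\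
  (forall A, Sg A -> Sg (fun x => S x /\ ~ A x)) /\
  (forall A : nat -> X -> Prop, (forall n, Sg (A n)) -> Sg (fun x => exists n, A n x)).

Definition borel_on (S : X -> Prop) (op : (X -> Prop) -> Prop) (A : X -> Prop) : Prop :=
  forall Sg, sigma_algebra_on S Sg -> (forall U, op U -> Sg U) -> Sg A.

Definition trace_borel (S' S : X -> Prop) (op : (X -> Prop) -> Prop) (A : X -> Prop) : Prop :=
  exists B, borel_on S op B /\ forall x, A x <-> (B x /\ S' x).

Definition prod_open (op : (X -> Prop) -> Prop) (P : X * X -> Prop) : Prop :=
  forall p, P p -> exists U V, op U /\ op V /\ U (fst p) /\ V (snd p) /\
     forall a b, U a -> V b -> P (a, b).

Definition polish_on (S : X -> Prop) (op : (X -> Prop) -> Prop) : Prop :=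
  is_topology_on S op /\
  (exists d : nat -> X, (forall n, S (d n)) /\
     forall U, op U -> (exists x, U x) -> exists n, U (d n)) /\
  (exists dist : X -> X -> R,
     (forall x y, S x -> S y -> 0 <= dist x y) /\
     (forall x y, S x -> S y -> (dist x y = 0 <-> x = y)) /\
     (forall x y, S x -> S y -> dist x y = dist y x) /\
     (forall x y z, S x -> S y -> S z -> dist x z <= dist x y + dist y z) /\
     (forall U, op U <-> (subset U S /\ forall x, U x -> exists eps, eps > 0 /\
                             forall y, S y -> dist x y < eps -> U y)) /\
     (forall u : nat -> X, (forall n, S (u n)) ->
        (forall eps, eps > 0 -> exists N, forall m n, (N <= m)%nat -> (N <= n)%nat ->
            dist (u m) (u n) < eps) ->
        exists l, S l /\ forall eps, eps > 0 -> exists N, forall n, (N <= n)%nat ->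
            dist (u n) l < eps)).

Definition polish_group_on (S : X -> Prop) (add : X -> X -> X) (opp : X -> X)
  (op : (X -> Prop) -> Prop) : Prop :=
  polish_on S op /\
  (forall W, op W -> prod_open op (fun p => S (fst p) /\ S (snd p) /\ W (add (fst p) (snd p)))) /\
  (forall W, op W -> op (fun x => S x /\ W (opp x))).

End Topo.

Definition Bf_polishable (H : PreHilbert) (op : ((H -> H) -> Prop) -> Prop) : Prop :=
  exists tau : ((H -> H) -> Prop) -> Prop,
    polish_group_on (@is_finite_rank H) (@op_add H) (@op_opp H) tau /\
    forall A, borel_on (@is_finite_rank H) tau A <->
              trace_borel (@is_finite_rank H) (@is_bounded_op H) op A.

(* Suppose a Polish group topology on B_f(H) had the Borel sets of the strong
   operator topology (or of the norm topology, which is finer).  Say that T has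
   real rank at least m when some m x m compression of a matrix
   (Re <T e_k, e_l>)_{k,l} is within 1/2 of the identity; this is an
   SOT-open condition, and a finite-rank operator whose range is spanned by n
   vectors has real rank below 2n + 1.  So B_f(H) is the countable union of the
   Borel sets F_m of finite-rank operators of real rank below m, and by Baire
   some F_m is comeager in a nonempty open set U.  Let P be a projection of rank
   2m.  The uncountably many translates U + tP cannot all use different balls
   from a countable base, so for some t <> s there is y with both y - tP and
   y - sP in F_m.  Their difference (s - t)P has rank 2m, so one of them has
   real rank at least m: a contradiction. *)

From Stdlib Require Import Reals List Lra Lia Classical ClassicalEpsilon
  FunctionalExtensionality PropExtensionality Cantor.
From mathcomp Require all_boot all_order all_algebra Rstruct zify.
Open Scope R_scope.

(** * Uncountability of the reals *)

(* Keeps a third of [a, b] that stays away from [c]. *)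
Definition trisect (c : R) (ab : R * R) : R * R :=
  let (a, b) := ab in
  if Rle_dec c ((a + b) / 2) then ((a + 2 * b) / 3, b) else (a, (2 * a + b) / 3).

Fixpoint trisections (u : nat -> R) (n : nat) : R * R :=
  match n with O => (0, 1) | S k => trisect (u k) (trisections u k) end.

Lemma trisect_spec c a b : a < b ->
  let (a', b') := trisect c (a, b) in a <= a' < b' /\ b' <= b /\ (c < a' \/ b' < c).
Proof. intros Hab; unfold trisect; destruct (Rle_dec c ((a + b) / 2)); lra. Qed.

Lemma trisections_lt u n : fst (trisections u n) < snd (trisections u n).
Proof.
  induction n as [|n IH]; simpl; [lra|].
  destruct (trisections u n) as [a b]; simpl in IH.
  pose proof (trisect_spec (u n) a b IH) as Hs.
  destruct (trisect (u n) (a, b)); simpl; lra.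
Qed.

Lemma trisections_nested u n k :
  fst (trisections u n) <= fst (trisections u (n + k)) /\
  snd (trisections u (n + k)) <= snd (trisections u n).
Proof.
  induction k as [|k IH]; [rewrite Nat.add_0_r; lra|].
  rewrite Nat.add_succ_r; simpl.
  pose proof (trisections_lt u (n + k)) as Hlt.
  destruct (trisections u (n + k)) as [a b]; simpl in IH, Hlt.
  pose proof (trisect_spec (u (n + k)%nat) a b Hlt) as Hs.
  destruct (trisect (u (n + k)%nat) (a, b)); simpl; lra.
Qed.

Lemma trisections_left_le_right u n k : fst (trisections u n) <= snd (trisections u k).
Proof.
  destruct (Nat.le_ge_cases n k) as [Hnk|Hkn].
  - replace k with (n + (k - n))%nat by lia.
    pose proof (trisections_nested u n (k - n)); pose proof (trisections_lt u (n + (k - n))); lra.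
  - replace n with (k + (n - k))%nat by lia.
    pose proof (trisections_nested u k (n - k)); pose proof (trisections_lt u (k + (n - k))); lra.
Qed.

Lemma R_not_enumerable (u : nat -> R) : exists x, forall n, u n <> x.
Proof.
  set (E := fun x => exists n, x = fst (trisections u n)).
  assert (HE : bound E).
  { exists (snd (trisections u 0)). intros x [n ->]. apply trisections_left_le_right. }
  destruct (completeness E HE) as [l [Hub Hlub]]; [exists 0; exists 0%nat; reflexivity|].
  exists l; intros n Hn.
  assert (Hl : fst (trisections u (S n)) <= l <= snd (trisections u (S n))).
  { split; [apply Hub; exists (S n); reflexivity|].
    apply Hlub; intros x [k ->]; apply trisections_left_le_right. }
  simpl in Hl; pose proof (trisections_lt u n) as Hlt.
  destruct (trisections u n) as [a b]; simpl in Hlt.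
  pose proof (trisect_spec (u n) a b Hlt) as Hs.
  destruct (trisect (u n) (a, b)); simpl in Hl; lra.
Qed.

Lemma R_not_injective_nat (g : R -> nat) : exists t s, t <> s /\ g t = g s.
Proof.
  apply NNPP; intros Hinj.
  assert (Hpre : forall n, exists t, (exists s, g s = n) -> g t = n).
  { intros n; destruct (classic (exists s, g s = n)) as [[s Hs]|Hn].
    - exists s; auto.
    - exists 0; tauto. }
  destruct (R_not_enumerable (fun n => proj1_sig (constructive_indefinite_description _ (Hpre n))))
    as [x Hx].
  apply (Hx (g x)); destruct (constructive_indefinite_description _ _) as [t Ht]; simpl.
  specialize (Ht (ex_intro _ x eq_refl)).
  apply NNPP; intros Hne; apply Hinj; exists t, x; auto.
Qed.

Lemma inv_succ_lt eps : eps > 0 -> exists k, / INR (S k) < eps.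
Proof.
  intros Heps; destruct (archimed_cor1 eps Heps) as [N [HN HN0]].
  exists (pred N); rewrite Nat.succ_pred_pos by lia; exact HN.
Qed.

(** * Baire category in complete metric spaces *)

Section CompleteMetric.
Variable X : Type.
Variable Sx : X -> Prop.
Variable op : (X -> Prop) -> Prop.
Variable dist : X -> X -> R.
Hypothesis Htop : is_topology_on Sx op.
Hypothesis Hdist0 : forall x y, Sx x -> Sx y -> (dist x y = 0 <-> x = y).
Hypothesis Hsym : forall x y, Sx x -> Sx y -> dist x y = dist y x.
Hypothesis Htri : forall x y z, Sx x -> Sx y -> Sx z -> dist x z <= dist x y + dist y z.
Hypothesis Hopen : forall U, op U <-> (subset U Sx /\ forall x, U x -> exists eps, eps > 0 /\
                             forall y, Sx y -> dist x y < eps -> U y).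
Hypothesis Hcompl : forall u : nat -> X, (forall n, Sx (u n)) ->
        (forall eps, eps > 0 -> exists N, forall m n, (N <= m)%nat -> (N <= n)%nat ->
            dist (u m) (u n) < eps) ->
        exists l, Sx l /\ forall eps, eps > 0 -> exists N, forall n, (N <= n)%nat ->
            dist (u n) l < eps.

Lemma open_sub U x : op U -> U x -> Sx x.
Proof. intros HU; exact (proj1 Htop U HU x). Qed.

Lemma open_carrier : op Sx.
Proof. exact (proj1 (proj2 Htop)). Qed.

Lemma open_inter U V : op U -> op V -> op (fun x => U x /\ V x).
Proof. exact (proj1 (proj2 (proj2 Htop)) U V). Qed.

Lemma open_union (F : (X -> Prop) -> Prop) :
  (forall U, F U -> op U) -> op (fun x => exists U, F U /\ U x).
Proof. exact (proj2 (proj2 (proj2 Htop)) F). Qed.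

Lemma open_ext U V : op U -> (forall x, U x <-> V x) -> op V.
Proof.
  intros HU HUV; replace V with U; [exact HU|].
  apply functional_extensionality; intros x; apply propositional_extensionality; auto.
Qed.

Lemma dist_refl x : Sx x -> dist x x = 0.
Proof. intros Hx; apply (Hdist0 x x Hx Hx); reflexivity. Qed.

Definition ball (x : X) (r : R) : X -> Prop := fun y => Sx y /\ dist x y < r.

Lemma ball_center x r : Sx x -> r > 0 -> ball x r x.
Proof. intros Hx Hr; split; [exact Hx|]; rewrite dist_refl; auto. Qed.

Lemma ball_open x r : Sx x -> op (ball x r).
Proof.
  intros Hx; apply Hopen; split; [intros y [Hy _]; exact Hy|].
  intros y [Hy Hxy]; exists (r - dist x y); split; [lra|].
  intros z Hz Hyz; split; [exact Hz|].
  pose proof (Htri x y z Hx Hy Hz); lra.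
Qed.

Lemma open_ball U x : op U -> U x ->
  exists eps, eps > 0 /\ forall y, Sx y -> dist x y < eps -> U y.
Proof. intros HU; exact (proj2 (proj1 (Hopen U) HU) x). Qed.

Definition nowhere_dense (N : X -> Prop) : Prop :=
  forall V, op V -> (exists x, V x) -> exists W, op W /\ (exists x, W x) /\
     (forall x, W x -> V x) /\ forall x, W x -> ~ N x.

Definition meager (M : X -> Prop) : Prop :=
  exists Ns : nat -> X -> Prop, (forall k, nowhere_dense (Ns k)) /\
    forall x, M x -> exists k, Ns k x.

Lemma meager_sub A B : (forall x, A x -> B x) -> meager B -> meager A.
Proof. intros HAB [Ns [HNs HB]]; exists Ns; split; auto. Qed.

Lemma meager_empty : meager (fun _ => False).
Proof.
  exists (fun _ _ => False); split; [|tauto].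
  intros k V HV Hne; exists V; repeat split; auto.
Qed.

Lemma meager_countable_union (A : nat -> X -> Prop) :
  (forall n, meager (A n)) -> meager (fun x => exists n, A n x).
Proof.
  intros HA.
  assert (HN : forall n, { Ns : nat -> X -> Prop |
    (forall k, nowhere_dense (Ns k)) /\ forall x, A n x -> exists k, Ns k x }).
  { intros n; apply constructive_indefinite_description, HA. }
  exists (fun k => let (i, j) := of_nat k in proj1_sig (HN i) j); split.
  - intros k; destruct (of_nat k) as [i j]; apply (proj1 (proj2_sig (HN i))).
  - intros x [n Hn]; destruct (proj2 (proj2_sig (HN n)) x Hn) as [j Hj].
    exists (to_nat (n, j)); rewrite cancel_of_to; exact Hj.
Qed.

Lemma meager_union A B : meager A -> meager B -> meager (fun x => A x \/ B x).
Proof.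
  intros HA HB.
  apply meager_sub with (fun x => exists n, (match n with O => A | _ => B end) x).
  - intros x [Hx|Hx]; [exists O|exists 1%nat]; exact Hx.
  - apply meager_countable_union; intros [|n]; auto.
Qed.

Section NestedBalls.
Variable Ns : nat -> X -> Prop.
Hypothesis HNs : forall k, nowhere_dense (Ns k).

Definition shrink (k : nat) (p q : X * R) : Prop :=
  Sx (fst q) /\ snd q > 0 /\ snd q <= snd p / 2 /\
  (forall y, Sx y -> dist (fst q) y < 2 * snd q -> dist (fst p) y < snd p) /\
  (forall y, Sx y -> dist (fst q) y < 2 * snd q -> ~ Ns k y).

Lemma shrink_exists k p : exists q, Sx (fst p) -> snd p > 0 -> shrink k p q.
Proof.
  destruct (classic (Sx (fst p) /\ snd p > 0)) as [[Hx Hr]|Hn]; [|exists p; tauto].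
  destruct p as [x r]; simpl in *.
  destruct (HNs k (ball x r) (ball_open x r Hx)) as [W [HW [[z Hz] [HWV HWN]]]].
  { exists x; apply ball_center; auto. }
  destruct (open_ball W z HW Hz) as [eps [Heps Hball]].
  exists (z, Rmin eps r / 2); intros _ _.
  pose proof (Rmin_l eps r); pose proof (Rmin_r eps r).
  assert (Rmin eps r > 0) by (apply Rmin_glb_lt; lra).
  unfold shrink; simpl; repeat split; try lra.
  - exact (open_sub W z HW Hz).
  - intros y Hy Hzy; apply (HWV y (Hball y Hy ltac:(lra))).
  - intros y Hy Hzy; apply HWN, Hball; auto; lra.
Qed.

Definition next_ball (k : nat) (p : X * R) : X * R :=
  proj1_sig (constructive_indefinite_description _ (shrink_exists k p)).

Variable p0 : X * R.
Hypothesis Hp0 : Sx (fst p0).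
Hypothesis Hr0 : snd p0 > 0.

Fixpoint balls (n : nat) : X * R :=
  match n with O => p0 | S k => next_ball k (balls k) end.

Let center n := fst (balls n).
Let radius n := snd (balls n).

Lemma balls_shrink n : Sx (center n) /\ radius n > 0 /\ shrink n (balls n) (balls (S n)).
Proof.
  assert (Hnext : forall k p, Sx (fst p) -> snd p > 0 -> shrink k p (next_ball k p)).
  { intros k p; unfold next_ball; destruct (constructive_indefinite_description _ _); auto. }
  induction n as [|n [Hx [Hr Hs]]].
  - split; [exact Hp0|split; [exact Hr0|apply Hnext; auto]].
  - destruct Hs as (Hx' & Hr' & _).
    split; [exact Hx'|split; [exact Hr'|apply Hnext; auto]].
Qed.

Lemma balls_nested k j y : Sx y ->
  dist (center (k + j)%nat) y < 2 * radius (k + j)%nat -> dist (center k) y < 2 * radius k.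
Proof.
  revert k; induction j as [|j IH]; intros k Hy Hd; [rewrite Nat.add_0_r in Hd; exact Hd|].
  apply IH; [exact Hy|]; rewrite Nat.add_succ_r in Hd.
  destruct (balls_shrink (k + j)) as (_ & Hr & _ & _ & _ & Hin & _).
  pose proof (Hin y Hy Hd); unfold center, radius in *; lra.
Qed.

Lemma balls_centers_close k n : (k <= n)%nat -> dist (center k) (center n) < radius k.
Proof.
  intros Hkn; destruct (balls_shrink k) as (Hk & Hrk & _ & _ & _ & Hin & _).
  destruct (Nat.eq_dec k n) as [<-|Hne]; [rewrite dist_refl; auto|].
  apply Hin; [apply balls_shrink|].
  replace n with (S k + (n - S k))%nat by lia.
  apply (balls_nested (S k) (n - S k)); [apply balls_shrink|].
  destruct (balls_shrink (S k + (n - S k))) as (Hx & Hr & _).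
  rewrite dist_refl by exact Hx; lra.
Qed.

Lemma balls_radius n : radius n <= snd p0 * (/ 2) ^ n.
Proof.
  induction n as [|n IH]; [unfold radius; simpl; lra|].
  destruct (balls_shrink n) as (_ & _ & _ & _ & Hhalf & _); simpl.
  change (radius (S n) <= radius n / 2) in Hhalf; lra.
Qed.

Lemma balls_cauchy eps : eps > 0 -> exists N, forall m n, (N <= m)%nat -> (N <= n)%nat ->
  dist (center m) (center n) < eps.
Proof.
  intros Heps.
  destruct (pow_lt_1_zero (/ 2) ltac:(rewrite Rabs_pos_eq; lra) (eps / (2 * snd p0)))
    as [N HN]; [apply Rdiv_lt_0_compat; lra|].
  exists N; intros m n Hm Hn.
  pose proof (HN N (Nat.le_refl N)) as HNN.
  rewrite Rabs_pos_eq in HNN by (apply pow_le; lra).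
  assert (radius N < eps / 2).
  { apply Rle_lt_trans with (1 := balls_radius N).
    apply Rmult_lt_compat_l with (r := snd p0) in HNN; [|lra].
    replace (snd p0 * (eps / (2 * snd p0))) with (eps / 2) in HNN by (field; lra); lra. }
  pose proof (balls_centers_close N m Hm); pose proof (balls_centers_close N n Hn).
  pose proof (Htri (center m) (center N) (center n)
                (proj1 (balls_shrink m)) (proj1 (balls_shrink N)) (proj1 (balls_shrink n))).
  rewrite (Hsym (center m) (center N)) in * by apply balls_shrink; lra.
Qed.

Lemma balls_limit : exists l, Sx l /\ forall k, dist (center k) l < 2 * radius k.
Proof.
  destruct (Hcompl center (fun n => proj1 (balls_shrink n)) balls_cauchy) as [l [Hl Hlim]].
  exists l; split; [exact Hl|]; intros k.
  destruct (Rle_dec (dist (center k) l) (radius k)) as [Hle|Hgt];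
    [pose proof (balls_shrink k); lra|exfalso].
  destruct (Hlim (dist (center k) l - radius k) ltac:(lra)) as [N HN].
  pose proof (HN (Nat.max k N) (Nat.le_max_r k N)).
  pose proof (balls_centers_close k (Nat.max k N) (Nat.le_max_l k N)).
  pose proof (Htri (center k) (center (Nat.max k N)) l
                (proj1 (balls_shrink k)) (proj1 (balls_shrink _)) Hl); lra.
Qed.

Lemma balls_limit_avoids : exists l, Sx l /\ dist (fst p0) l < 2 * snd p0 /\ forall k, ~ Ns k l.
Proof.
  destruct balls_limit as [l [Hl Hlk]]; exists l; split; [exact Hl|split; [apply (Hlk 0%nat)|]].
  intros k; destruct (balls_shrink k) as (_ & _ & _ & _ & _ & _ & Hout).
  exact (Hout l Hl (Hlk (S k))).
Qed.
End NestedBalls.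

Theorem baire_category V M : op V -> (exists x, V x) -> meager M -> exists x, V x /\ ~ M x.
Proof.
  intros HV [x0 Hx0] [Ns [HNs HM]].
  assert (Hx0s : Sx x0) by exact (open_sub V x0 HV Hx0).
  destruct (open_ball V x0 HV Hx0) as [eps [Heps HVball]].
  destruct (balls_limit_avoids Ns HNs (x0, eps / 2) Hx0s ltac:(simpl; lra))
    as [l [Hl [Hdl Hout]]]; simpl in Hdl.
  exists l; split; [apply HVball; auto; lra|].
  intros HMl; destruct (HM l HMl) as [k Hk]; exact (Hout k Hk).
Qed.

Definition has_baire_property (A : X -> Prop) : Prop :=
  subset A Sx /\ exists U, op U /\
    meager (fun x => A x /\ ~ U x) /\ meager (fun x => U x /\ ~ A x).

Lemma baire_property_open U : op U -> has_baire_property U.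
Proof.
  intros HU; split; [intros x; exact (open_sub U x HU)|].
  exists U; split; [exact HU|].
  split; apply meager_sub with (fun _ => False); try apply meager_empty; tauto.
Qed.

Definition exterior (U : X -> Prop) : X -> Prop :=
  fun x => exists V, (op V /\ forall y, V y -> ~ U y) /\ V x.

Lemma exterior_open U : op (exterior U).
Proof. apply open_union; intros V [HV _]; exact HV. Qed.

Lemma nowhere_dense_frontier U : op U ->
  nowhere_dense (fun x => Sx x /\ ~ U x /\ ~ exterior U x).
Proof.
  intros HU V HV [v Hv].
  destruct (classic (exists y, V y /\ U y)) as [[y Hy]|Hno].
  - exists (fun x => V x /\ U x); split; [apply open_inter; auto|].
    split; [exists y; exact Hy|split; tauto].
  - exists V; split; [exact HV|split; [exists v; exact Hv|split; [auto|]]].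
    intros x Hx (_ & _ & Hext); apply Hext; exists V; split; [|exact Hx].
    split; [exact HV|intros z Hz HUz; apply Hno; exists z; auto].
Qed.

Lemma baire_property_compl A : has_baire_property A ->
  has_baire_property (fun x => Sx x /\ ~ A x).
Proof.
  intros [HAS [U [HU [HAU HUA]]]].
  split; [intros x [Hx _]; exact Hx|exists (exterior U); split; [apply exterior_open|split]].
  - apply meager_sub with (fun x => (U x /\ ~ A x) \/ (Sx x /\ ~ U x /\ ~ exterior U x)).
    + intros x [[Hx HA] Hext]; destruct (classic (U x)); [left|right]; tauto.
    + apply meager_union; [exact HUA|].
      exists (fun _ x => Sx x /\ ~ U x /\ ~ exterior U x); split.
      * intros _; apply nowhere_dense_frontier, HU.
      * intros x Hx; exists O; exact Hx.
  - apply meager_sub with (fun x => A x /\ ~ U x); [|exact HAU].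
    intros x [[V [[HV HVU] HVx]] Hn].
    split; [apply NNPP; intros HA; apply Hn; split; [exact (open_sub V x HV HVx)|exact HA]|].
    exact (HVU x HVx).
Qed.

Lemma baire_property_countable_union (A : nat -> X -> Prop) :
  (forall n, has_baire_property (A n)) -> has_baire_property (fun x => exists n, A n x).
Proof.
  intros HA.
  assert (HU : forall n, { U | op U /\ meager (fun x => A n x /\ ~ U x) /\
                                       meager (fun x => U x /\ ~ A n x) }).
  { intros n; apply constructive_indefinite_description, (proj2 (HA n)). }
  split; [intros x [n Hn]; exact (proj1 (HA n) x Hn)|].
  exists (fun x => exists V, (exists n, V = proj1_sig (HU n)) /\ V x); split; [|split].
  - apply open_union; intros V [n ->]; apply (proj2_sig (HU n)).
  - apply meager_sub with (fun x => exists n, A n x /\ ~ proj1_sig (HU n) x).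
    + intros x [[n Hn] Hno]; exists n; split; [exact Hn|].
      intros Hx; apply Hno; exists (proj1_sig (HU n)); eauto.
    + apply meager_countable_union; intros n; apply (proj2_sig (HU n)).
  - apply meager_sub with (fun x => exists n, proj1_sig (HU n) x /\ ~ A n x).
    + intros x [[V [[n ->] Hx]] Hno]; exists n; split; [exact Hx|].
      intros HAx; apply Hno; exists n; exact HAx.
    + apply meager_countable_union; intros n; apply (proj2_sig (HU n)).
Qed.

Lemma baire_property_sigma_algebra : sigma_algebra_on Sx has_baire_property.
Proof.
  split; [intros A [HA _]; exact HA|split; [apply baire_property_open, open_carrier|split]].
  - apply baire_property_compl.
  - apply baire_property_countable_union.
Qed.

Lemma borel_baire_property A : borel_on Sx op A -> has_baire_property A.
Proof. intros HA; apply HA; [apply baire_property_sigma_algebra|apply baire_property_open]. Qed.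

Lemma comeager_in_open_of_cover (A : nat -> X -> Prop) :
  (exists x, Sx x) -> (forall m, has_baire_property (A m)) ->
  (forall x, Sx x -> exists m, A m x) ->
  exists m U, op U /\ (exists u, U u) /\ meager (fun x => U x /\ ~ A m x).
Proof.
  intros Hne HA Hcov.
  destruct (classic (exists m, ~ meager (A m))) as [[m Hm]|Hall].
  - destruct (HA m) as [_ [U [HU [HAU HUA]]]]; exists m, U; split; [exact HU|split; [|exact HUA]].
    apply NNPP; intros Hno; apply Hm.
    apply meager_sub with (fun x => A m x /\ ~ U x); [|exact HAU].
    intros x Hx; split; [exact Hx|intros Hu; apply Hno; exists x; exact Hu].
  - exfalso.
    destruct (baire_category Sx (fun x => exists m, A m x) open_carrier Hne) as [x [Hx Hnx]].
    + apply meager_countable_union; intros m; apply NNPP; intros Hn; apply Hall; eauto.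
    + exact (Hnx (Hcov x Hx)).
Qed.

Section Translations.
Variable d : nat -> X.
Hypothesis Hd : forall n, Sx (d n).
Hypothesis Hdense : forall U, op U -> (exists x, U x) -> exists n, U (d n).
Variable add : X -> X -> X.
Variable opp : X -> X.
Hypothesis Hadd_closed : forall a b, Sx a -> Sx b -> Sx (add a b).
Hypothesis Hopp_closed : forall a, Sx a -> Sx (opp a).
Hypothesis Hadd_oppK : forall y c, Sx y -> Sx c -> add (add y (opp c)) c = y.
Hypothesis Hadd_addK : forall y c, Sx y -> Sx c -> add (add y c) (opp c) = y.
Hypothesis Hadd_cont : forall W, op W ->
  prod_open op (fun p => Sx (fst p) /\ Sx (snd p) /\ W (add (fst p) (snd p))).

Lemma open_basic_ball W x : op W -> W x ->
  exists i k, forall y, ball (d i) (/ INR (S k)) y -> W y.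
Proof.
  intros HW Hx; assert (Hxs : Sx x) by exact (open_sub W x HW Hx).
  destruct (open_ball W x HW Hx) as [eps [Heps Hball]].
  destruct (Hdense (ball x (eps / 2))) as [i [_ Hi]];
    [apply ball_open, Hxs|exists x; apply ball_center; auto; lra|].
  destruct (inv_succ_lt (eps / 2)) as [k Hk]; [lra|].
  exists i, k; intros y [Hy Hdy]; apply Hball; [exact Hy|].
  pose proof (Htri x (d i) y Hxs (Hd i) Hy); lra.
Qed.

Lemma translate_open W c : op W -> Sx c -> op (fun y => Sx y /\ W (add y c)).
Proof.
  intros HW Hc.
  apply open_ext with
    (fun x => exists V, (op V /\ forall y, V y -> Sx y /\ W (add y c)) /\ V x).
  - apply open_union; intros V [HV _]; exact HV.
  - intros x; split; [intros [V [[_ HV] Hx]]; auto|intros [Hx HWx]].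
    destruct (Hadd_cont W HW (x, c)) as (V & V' & HV & _ & HVx & HV'c & Hprod); [simpl; auto|].
    exists V; split; [split; [exact HV|]|exact HVx].
    intros y Hy; destruct (Hprod y c Hy HV'c) as (Hys & _ & HWy); split; [exact Hys|exact HWy].
Qed.

Lemma nowhere_dense_translate N c : nowhere_dense N -> Sx c ->
  nowhere_dense (fun y => Sx y /\ N (add y c)).
Proof.
  intros HN Hc V HV [v Hv]; assert (Hvs : Sx v) by exact (open_sub V v HV Hv).
  destruct (HN (fun z => Sx z /\ V (add z (opp c)))) as [W [HW [[w Hw] [HWV HWN]]]].
  { apply translate_open; auto. }
  { exists (add v c); split; [auto|rewrite Hadd_addK; auto]. }
  assert (Hws : Sx w) by exact (open_sub W w HW Hw).
  exists (fun y => Sx y /\ W (add y c)); split; [apply translate_open; auto|].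
  split; [exists (add w (opp c)); split; [auto|rewrite Hadd_oppK; auto]|split].
  - intros y [Hy HWy]; destruct (HWV _ HWy) as [_ HVy]; rewrite Hadd_addK in HVy; auto.
  - intros y [_ HWy] [_ HNy]; exact (HWN _ HWy HNy).
Qed.

Lemma meager_translate M c : meager M -> Sx c -> meager (fun y => Sx y /\ M (add y c)).
Proof.
  intros [Ns [HNs HM]] Hc; exists (fun k y => Sx y /\ Ns k (add y c)); split.
  - intros k; apply nowhere_dense_translate; auto.
  - intros y [Hy HMy]; destruct (HM _ HMy) as [k Hk]; exists k; auto.
Qed.

(* Each translate [U + T t] contains one of countably many basic balls, so two
   of the uncountably many translates share one, where Baire applies. *)
Lemma comeager_translates_meet (A U : X -> Prop) (T : R -> X) :
  op U -> (exists u, U u) -> meager (fun x => U x /\ ~ A x) -> (forall t, Sx (T t)) ->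
  exists t s y, t <> s /\ Sx y /\ A (add y (opp (T t))) /\ A (add y (opp (T s))).
Proof.
  intros HU [u Hu] HM HT; assert (Hus : Sx u) by exact (open_sub U u HU Hu).
  set (Tr := fun t y => Sx y /\ U (add y (opp (T t)))).
  assert (Hcode : forall t, exists p : nat * nat,
             forall y, ball (d (fst p)) (/ INR (S (snd p))) y -> Tr t y).
  { intros t; destruct (open_basic_ball (Tr t) (add u (T t))) as [i [k Hik]].
    - apply translate_open; auto.
    - split; [auto|rewrite Hadd_addK; auto].
    - exists (i, k); exact Hik. }
  set (code := fun t => proj1_sig (constructive_indefinite_description _ (Hcode t))).
  assert (Hcodeb : forall t y, ball (d (fst (code t))) (/ INR (S (snd (code t)))) y -> Tr t y)
    by (intros t; exact (proj2_sig (constructive_indefinite_description _ (Hcode t)))).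
  destruct (R_not_injective_nat (fun t => to_nat (code t))) as [t [s [Hts Hcts]]].
  apply (f_equal of_nat) in Hcts; rewrite !cancel_of_to in Hcts.
  set (Bad := fun t y => Sx y /\ (fun x => U x /\ ~ A x) (add y (opp (T t)))).
  destruct (baire_category (ball (d (fst (code t))) (/ INR (S (snd (code t)))))
              (fun y => Bad t y \/ Bad s y)) as [y [Hy Hny]].
  - apply ball_open, Hd.
  - exists (d (fst (code t))); apply ball_center; [apply Hd|].
    apply Rinv_0_lt_compat, lt_0_INR; lia.
  - apply meager_union; apply meager_translate; auto.
  - destruct (Hcodeb t y Hy) as [Hys HUt].
    rewrite Hcts in Hy; destruct (Hcodeb s y Hy) as [_ HUs].
    exists t, s, y; split; [exact Hts|split; [exact Hys|split]];
      apply NNPP; intros Hn; apply Hny; [left|right]; repeat split; auto.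
Qed.
End Translations.
End CompleteMetric.

Theorem polish_group_borel_cover_translates X (S : X -> Prop) (add : X -> X -> X)
    (opp : X -> X) (op : (X -> Prop) -> Prop) (A : nat -> X -> Prop) (T : nat -> R -> X) :
  polish_group_on S add opp op ->
  (forall a b, S a -> S b -> S (add a b)) -> (forall a, S a -> S (opp a)) ->
  (forall y c, S y -> S c -> add (add y (opp c)) c = y) ->
  (forall y c, S y -> S c -> add (add y c) (opp c) = y) ->
  (forall m, borel_on S op (A m)) -> (forall x, S x -> exists m, A m x) ->
  (forall m t, S (T m t)) ->
  exists m t s y, t <> s /\ S y /\ A m (add y (opp (T m t))) /\ A m (add y (opp (T m s))).
Proof.
  intros [[Htop [[d [Hd Hdense]] (dist & _ & Hdist0 & Hsym & Htri & Hopen & Hcompl)]] [Hcont _]]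
    Hadd Hopp HoppK HaddK HA Hcov HT.
  destruct (comeager_in_open_of_cover X S op dist Htop Hdist0 Hsym Htri Hopen Hcompl A)
    as [m [U [HU [Hne HM]]]].
  - exists (T 0%nat 0); apply HT.
  - intros m; apply (borel_baire_property X S op Htop), HA.
  - exact Hcov.
  - destruct (comeager_translates_meet X S op dist Htop Hdist0 Hsym Htri Hopen Hcompl d Hd Hdense
                add opp Hadd Hopp HoppK HaddK Hcont (A m) U (T m) HU Hne HM (HT m))
      as (t & s & y & Hts & Hy & Ht & Hs).
    exists m, t, s, y; auto.
Qed.

(** * Finite real matrices *)

Fixpoint rsum (n : nat) (f : nat -> R) : R :=
  match n with O => 0 | S k => rsum k f + f k end.

Definition mmul (K : nat) (A B : nat -> nat -> R) : nat -> nat -> R :=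
  fun i j => rsum K (fun l => A i l * B l j).

(* Forces the top-left [m x m] block of [X] to be invertible ([near_id_det]),
   while being visibly stable under small perturbations ([near_id_perturb]). *)
Definition near_id (m : nat) (X : nat -> nat -> R) : Prop :=
  rsum m (fun i => rsum m (fun j => Rabs (X i j - if Nat.eqb i j then 1 else 0))) < / 2.

Lemma rsum_ext n f g : (forall i, (i < n)%nat -> f i = g i) -> rsum n f = rsum n g.
Proof. induction n as [|n IH]; intros Hfg; simpl; auto. rewrite IH, Hfg; auto. Qed.

Lemma rsum_le n f g : (forall i, (i < n)%nat -> f i <= g i) -> rsum n f <= rsum n g.
Proof.
  induction n as [|n IH]; intros Hfg; simpl; [lra|].
  pose proof (Hfg n ltac:(lia)); pose proof (IH ltac:(auto)); lra.
Qed.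

Lemma rsum_plus n f g : rsum n (fun i => f i + g i) = rsum n f + rsum n g.
Proof. induction n as [|n IH]; simpl; [ring|rewrite IH; ring]. Qed.

Lemma rsum_minus n f g : rsum n (fun i => f i - g i) = rsum n f - rsum n g.
Proof. induction n as [|n IH]; simpl; [ring|rewrite IH; ring]. Qed.

Lemma rsum_scal n c f : rsum n (fun i => c * f i) = c * rsum n f.
Proof. induction n as [|n IH]; simpl; [ring|rewrite IH; ring]. Qed.

Lemma Rabs_rsum n f : Rabs (rsum n f) <= rsum n (fun i => Rabs (f i)).
Proof.
  induction n as [|n IH]; simpl; [rewrite Rabs_R0; lra|].
  eapply Rle_trans; [apply Rabs_triang|lra].
Qed.

Lemma rsum_ge0 n f : (forall i, (i < n)%nat -> 0 <= f i) -> 0 <= rsum n f.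
Proof.
  induction n as [|n IH]; intros Hf; simpl; [lra|].
  pose proof (Hf n ltac:(lia)); pose proof (IH ltac:(auto)); lra.
Qed.

Lemma rsum_shift n f : rsum (S n) f = f 0%nat + rsum n (fun i => f (S i)).
Proof. induction n as [|n IH]; simpl in *; [ring|rewrite IH; ring]. Qed.

Lemma rsum_split n k f : rsum (n + k) f = rsum n f + rsum k (fun i => f (n + i)%nat).
Proof.
  induction k as [|k IH]; simpl; [rewrite Nat.add_0_r; ring|].
  rewrite Nat.add_succ_r; simpl; rewrite IH; ring.
Qed.

Lemma mmul_perturb K (Cm M M' Dm : nat -> nat -> R) eps i j :
  (forall k l, (k < K)%nat -> (l < K)%nat -> Rabs (M' k l - M k l) <= eps) ->
  Rabs (mmul K (mmul K Cm M') Dm i j - mmul K (mmul K Cm M) Dm i j) <=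
  eps * rsum K (fun l => rsum K (fun k => Rabs (Cm i k)) * Rabs (Dm l j)).
Proof.
  intros HM; unfold mmul; rewrite <- rsum_minus.
  eapply Rle_trans; [apply Rabs_rsum|]; rewrite <- rsum_scal; apply rsum_le; intros l Hl.
  rewrite <- Rmult_minus_distr_r, <- rsum_minus, Rabs_mult, <- Rmult_assoc.
  apply Rmult_le_compat_r; [apply Rabs_pos|].
  eapply Rle_trans; [apply Rabs_rsum|]; rewrite <- rsum_scal; apply rsum_le; intros k Hk.
  rewrite <- Rmult_minus_distr_l, Rabs_mult.
  pose proof (HM k l Hk Hl); pose proof (Rabs_pos (Cm i k)); nra.
Qed.

Lemma near_id_perturb m K (Cm M Dm : nat -> nat -> R) :
  near_id m (mmul K (mmul K Cm M) Dm) ->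
  exists eps, eps > 0 /\ forall M',
    (forall k l, (k < K)%nat -> (l < K)%nat -> Rabs (M' k l - M k l) <= eps) ->
    near_id m (mmul K (mmul K Cm M') Dm).
Proof.
  unfold near_id; intros Hnear; set (X := mmul K (mmul K Cm M) Dm) in *.
  set (s := rsum m (fun i => rsum m (fun j => Rabs (X i j - if Nat.eqb i j then 1 else 0)))) in *.
  set (B := fun i j => rsum K (fun l => rsum K (fun k => Rabs (Cm i k)) * Rabs (Dm l j))).
  set (Btot := rsum m (fun i => rsum m (fun j => B i j))).
  assert (HB : 0 <= Btot).
  { do 3 (apply rsum_ge0; intros).
    apply Rmult_le_pos; [apply rsum_ge0; intros; apply Rabs_pos|apply Rabs_pos]. }
  set (eps := (/ 2 - s) / (1 + Btot)).
  assert (Heps : eps > 0) by (apply Rdiv_lt_0_compat; lra).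
  assert (HepsB : eps * Btot = / 2 - s - eps) by (unfold eps; field; lra).
  exists eps; split; [exact Heps|].
  intros M' HM'; apply Rle_lt_trans with (s + eps * Btot); [|lra].
  unfold s at 1, Btot at 1; rewrite <- rsum_scal, <- rsum_plus; apply rsum_le; intros i Hi.
  rewrite <- rsum_scal, <- rsum_plus; apply rsum_le; intros j Hj.
  pose proof (mmul_perturb K Cm M M' Dm eps i j HM') as Hij; fold X in Hij.
  set (X' := mmul K (mmul K Cm M') Dm) in *.
  replace (X' i j - (if Nat.eqb i j then 1 else 0)) with
    ((X i j - (if Nat.eqb i j then 1 else 0)) + (X' i j - X i j)) by ring.
  eapply Rle_trans; [apply Rabs_triang|unfold B; lra].
Qed.

(* Statements below spell out [Rmult]/[Rminus] so that they read with the
   operations of [R] outside the module, not with those of [ring_scope]. *)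
Module RealMatrix.
Import all_boot all_order all_algebra Rstruct zify.
Import Order.TTheory GRing.Theory Num.Theory.
Local Open Scope ring_scope.

Lemma rsumE n f : rsum n f = \sum_(i < n) f i.
Proof. by elim: n => [|n IH] /=; rewrite ?big_ord0 // big_ord_recr /= IH. Qed.

Definition mx_of m n (A : nat -> nat -> R) : 'M[R]_(m, n) := \matrix_(i < m, j < n) A i j.

Definition entries {m n} (M : 'M[R]_(m, n)) : nat -> nat -> R :=
  fun i j => match (insub i : option 'I_m), (insub j : option 'I_n) with
             | Some i', Some j' => M i' j' | _, _ => 0 end.

Lemma mx_of_entries m n (M : 'M[R]_(m, n)) : mx_of m n (entries M) = M.
Proof. by apply/matrixP => i j; rewrite !mxE /entries !valK. Qed.

Lemma mx_of_mmul m K n (A B : nat -> nat -> R) :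
  mx_of m n (mmul K A B) = mx_of m K A *m mx_of K n B.
Proof.
apply/matrixP => i j; rewrite !mxE /mmul rsumE.
by apply: eq_bigr => l _; rewrite !mxE.
Qed.

Lemma eqb_ord m (i j : 'I_m) : Nat.eqb i j = (i == j).
Proof.
case: (eqVneq i j) => [->|Hne]; first by rewrite PeanoNat.Nat.eqb_refl.
by apply/PeanoNat.Nat.eqb_neq => Hij; move/eqP: Hne; apply; exact: val_inj.
Qed.

(* If [v X = 0] with [v != 0], then [v (1 - X) = v], which the l1 bound on
   [1 - X] forbids. *)
Lemma near_id_det m X : near_id m X -> \det (mx_of m m X) != 0.
Proof.
rewrite /near_id rsumE => Hn.
set E := 1%:M - mx_of m m X.
set tot := \sum_(i < m) \sum_(j < m) `|E i j|.
have Htot : tot < 2^-1.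
  move: Hn => /RltP; congr (_ < _); apply: eq_bigr => i _; rewrite rsumE.
  apply: eq_bigr => j _; rewrite /E !mxE eqb_ord; case: (i == j) => /=; rewrite distrC //.
apply/negP => /det0P [v vn0 vX].
have vE : v *m E = v by rewrite /E mulmxBr mulmx1 vX subr0.
have row_tot i : \sum_(j < m) `|E i j| <= tot.
  rewrite /tot [X in _ <= X](bigD1 i) //= lerDl sumr_ge0 // => k _; exact: sumr_ge0.
set V := \sum_(j < m) `|v 0 j|.
have HV : V <= V * tot.
  rewrite {1}/V -vE.
  apply: (le_trans (y := \sum_(j < m) \sum_(i < m) `|v 0 i| * `|E i j|)).
    apply: ler_sum => j _; rewrite mxE.
    by apply: (le_trans (ler_norm_sum _ _ _)); apply: ler_sum => i _; rewrite normrM.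
  rewrite exchange_big /= /V mulr_suml.
  by apply: ler_sum => i _; rewrite -mulr_sumr; apply: ler_wpM2l.
have V0 : V = 0.
  apply/eqP; rewrite eq_le sumr_ge0 ?andbT //.
  have : V * (1 - tot) <= 0 by rewrite mulrBr mulr1 subr_le0.
  have Hpos : 0 < 1 - tot by rewrite subr_gt0 (lt_trans Htot) // invf_lt1 // ltr1n.
  by rewrite pmulr_lle0.
move: vn0; rewrite (_ : v = 0) ?eqxx //.
apply/rowP => j; rewrite mxE.
move/eqP: V0; rewrite psumr_eq0 //.
move/allP => /(_ j (mem_index_enum j)) /implyP /(_ isT).
by rewrite normr_eq0 => /eqP.
Qed.

Lemma near_id_rank m X : near_id m X -> \rank (mx_of m m X) = m.
Proof. by move=> H; apply: mxrank_unit; rewrite unitmxE unitfE near_id_det. Qed.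

Lemma factored_not_near_id (m n K : nat) (C M P Q D : nat -> nat -> R) :
  (n < m)%coq_nat ->
  (forall i j, (i < K)%coq_nat -> (j < K)%coq_nat -> M i j = rsum n (fun p => Rmult (P i p) (Q p j))) ->
  ~ near_id m (mmul K (mmul K C M) D).
Proof.
move=> /ssrnat.ltP ltnm HM /near_id_rank; rewrite !mx_of_mmul.
have -> : mx_of K K M = mx_of K n P *m mx_of n K Q.
  apply/matrixP => i j; rewrite !mxE HM ?rsumE; try exact/ssrnat.ltP.
  by apply: eq_bigr => l _; rewrite !mxE.
move=> Hr.
have : (\rank (mx_of m K C *m (mx_of K n P *m mx_of n K Q) *m mx_of K m D) <= n)%N.
  apply: (leq_trans (mxrankM_maxl _ _)); apply: (leq_trans (mxrankM_maxr _ _)).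
  apply: (leq_trans (mxrankM_maxl _ _)); exact: rank_leq_col.
by rewrite Hr leqNgt ltnm.
Qed.

(* Compress with the Gaussian-elimination bases of [Z]. *)
Lemma rank_near_id (m N : nat) (Z : nat -> nat -> R) : (m <= \rank (mx_of N N Z))%N ->
  exists C D, near_id m (mmul N (mmul N C Z) D).
Proof.
move=> Hr; set Zm := mx_of N N Z.
have HmN : (m <= N)%N by apply: leq_trans Hr (rank_leq_row _).
set Cm := (pid_mx m : 'M[R]_(m, N)) *m invmx (col_ebase Zm).
set Dm := invmx (row_ebase Zm) *m (pid_mx m : 'M[R]_(N, m)).
exists (entries Cm), (entries Dm).
have HE : mx_of m m (mmul N (mmul N (entries Cm) Z) (entries Dm)) = 1%:M.
  rewrite !mx_of_mmul !mx_of_entries /Cm /Dm -/Zm -{2}(mulmx_ebase Zm).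
  rewrite !mulmxA mulmxKV ?col_ebase_unit //.
  rewrite -!mulmxA mulmxA (mulmxA (row_ebase Zm)) mulmxV ?row_ebase_unit // mul1mx.
  rewrite !mul_pid_mx.
  have -> : minn N (minn (minn N (minn m (\rank Zm))) m) = m.
    by apply/eqP; rewrite eqn_leq geq_min geq_minr orbT /= !leq_min leqnn Hr HmN.
  by rewrite pid_mx_1.
rewrite /near_id rsumE (eq_bigr (fun _ => 0)) ?big1 //.
  by apply: Rinv_0_lt_compat; apply: IZR_lt.
move=> i _; rewrite rsumE big1 // => j _.
have := congr1 (fun M : 'M[R]_m => M i j) HE; rewrite !mxE => ->.
by rewrite eqb_ord; case: (i == j) => /=; rewrite (Rminus_diag_eq _ _ erefl) Rabs_R0.
Qed.

(* [rank A + rank B >= rank (A - B) = N >= 2m]. *)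
Lemma scalar_gap_near_id (m N : nat) (A B : nat -> nat -> R) (c : R) :
  (2 * m <= N)%coq_nat -> c <> 0 ->
  (forall i, (i < N)%coq_nat -> Rminus (A i i) (B i i) = c) ->
  (forall i j, (i < N)%coq_nat -> (j < N)%coq_nat -> i <> j -> A i j = B i j) ->
  (exists C D, near_id m (mmul N (mmul N C A) D)) \/
  (exists C D, near_id m (mmul N (mmul N C B) D)).
Proof.
move=> /ssrnat.leP HN Hc Hdiag Hoff.
have Hdiff : mx_of N N A - mx_of N N B = c%:M.
  apply/matrixP => i j; rewrite !mxE.
  case: (eqVneq i j) => [<-|Hij] /=; first by rewrite mulr1n; apply: Hdiag; exact/ssrnat.ltP.
  rewrite mulr0n Hoff ?subrr //; try exact/ssrnat.ltP.
  by move=> Hij'; move/eqP: Hij; apply; exact: val_inj.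
have HrN : \rank (c%:M : 'M[R]_N) = N.
  by rewrite -scalemx1 mxrank_scale_nz ?mxrank1 //; apply/eqP.
have Hsum : (N <= \rank (mx_of N N A) + \rank (mx_of N N B))%N.
  rewrite -{1}HrN -Hdiff.
  apply: (leq_trans (mxrank_add _ _)); rewrite leq_add2l -scaleN1r; exact: mxrank_scale.
case: (leqP m (\rank (mx_of N N A))) => HA; first by left; exact: rank_near_id.
right; apply: rank_near_id; move: HA Hsum HN; clear; lia.
Qed.
End RealMatrix.

(** * Inner product spaces and finite-rank operators *)

Lemma C_ext (a b : C) : Cre a = Cre b -> Cim a = Cim b -> a = b.
Proof. destruct a, b; simpl; intros; subst; reflexivity. Qed.

Definition RtoC (r : R) : C := mkC r 0.
Definition Ci : C := mkC 0 1.

Lemma Cconj_add a b : Cconj (Cadd a b) = Cadd (Cconj a) (Cconj b).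
Proof. apply C_ext; simpl; lra. Qed.

Lemma sqrt_sum_sq_le a b : sqrt (a * a + b * b) <= Rabs a + Rabs b.
Proof.
  pose proof (Rabs_pos a); pose proof (Rabs_pos b).
  rewrite <- (sqrt_Rsqr (Rabs a + Rabs b)) by lra.
  apply sqrt_le_1_alt; unfold Rsqr.
  rewrite <- (Rabs_pos_eq (a * a)), <- (Rabs_pos_eq (b * b)), !Rabs_mult by nra; nra.
Qed.

Lemma nth_map_lt {A B : Type} (f : A -> B) (l : list A) (a : A) (b : B) i :
  (i < length l)%nat -> nth i (map f l) b = f (nth i l a).
Proof.
  intros Hi; rewrite (nth_indep (map f l) b (f a)) by (rewrite length_map; auto).
  apply map_nth.
Qed.

Section InnerProductSpace.
Variable H : PreHilbert.
Hypothesis Hassoc : forall x y z : H, hadd x (hadd y z) = hadd (hadd x y) z.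
Hypothesis Hcomm : forall x y : H, hadd x y = hadd y x.
Hypothesis Hadd0 : forall x : H, hadd x hzero = x.
Hypothesis HaddN : forall x : H, hadd x (hopp x) = hzero.
Hypothesis Hscal1 : forall x : H, hscal C1 x = x.
Hypothesis Hscal_mul : forall a b (x : H), hscal (Cmul a b) x = hscal a (hscal b x).
Hypothesis Hscal_addr : forall a (x y : H), hscal a (hadd x y) = hadd (hscal a x) (hscal a y).
Hypothesis Hscal_addl : forall a b (x : H), hscal (Cadd a b) x = hadd (hscal a x) (hscal b x).
Hypothesis Hinner_addl : forall x y z : H, hinner (hadd x y) z = Cadd (hinner x z) (hinner y z).
Hypothesis Hinner_scall : forall a (x y : H), hinner (hscal a x) y = Cmul a (hinner x y).
Hypothesis Hinner_conj : forall x y : H, hinner y x = Cconj (hinner x y).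
Hypothesis Hinner_ge0 : forall x : H, 0 <= Cre (hinner x x).
Hypothesis Hinner_eq0 : forall x : H, hinner x x = C0 -> x = hzero.
Hypothesis Hinf_dim : forall vs : list H, exists x, ~ in_span H vs x.

Lemma add0l (x : H) : hadd hzero x = x.
Proof. rewrite Hcomm; apply Hadd0. Qed.

Lemma addNl (x : H) : hadd (hopp x) x = hzero.
Proof. rewrite Hcomm; apply HaddN. Qed.

Lemma addrI (x y z : H) : hadd x y = hadd x z -> y = z.
Proof. intros E; rewrite <- (add0l y), <- (add0l z), <- (addNl x), <- !Hassoc, E; reflexivity. Qed.

Lemma add_idem_eq0 (s : H) : hadd s s = s -> s = hzero.
Proof. intros E; apply (addrI s); rewrite E, Hadd0; reflexivity. Qed.

Lemma scal0l (x : H) : hscal C0 x = hzero.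
Proof. apply add_idem_eq0; rewrite <- Hscal_addl; f_equal; apply C_ext; simpl; lra. Qed.

Lemma scal0r a : hscal a (@hzero H) = hzero.
Proof. apply add_idem_eq0; rewrite <- Hscal_addr, Hadd0; reflexivity. Qed.

Lemma opp_unique (x m : H) : hadd x m = hzero -> hopp x = m.
Proof. intros E; rewrite <- (Hadd0 (hopp x)), <- E, Hassoc, addNl, add0l; reflexivity. Qed.

Lemma opp_scal (x : H) : hopp x = hscal (RtoC (-1)) x.
Proof.
  apply opp_unique; rewrite <- (Hscal1 x) at 1; rewrite <- Hscal_addl.
  replace (Cadd C1 (RtoC (-1))) with C0 by (apply C_ext; simpl; lra); apply scal0l.
Qed.

Lemma opp_zero : hopp (@hzero H) = hzero.
Proof. rewrite opp_scal; apply scal0r. Qed.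

Lemma opp_add (x y : H) : hopp (hadd x y) = hadd (hopp x) (hopp y).
Proof. rewrite !opp_scal; apply Hscal_addr. Qed.

Lemma addACA (a b c d : H) : hadd (hadd a b) (hadd c d) = hadd (hadd a c) (hadd b d).
Proof. rewrite <- !Hassoc; f_equal; rewrite !Hassoc; f_equal; apply Hcomm. Qed.

Lemma inner0l (y : H) : hinner hzero y = C0.
Proof.
  assert (E : hinner (@hzero H) y = Cadd (hinner hzero y) (hinner hzero y))
    by (rewrite <- Hinner_addl, Hadd0; reflexivity).
  destruct (hinner hzero y) as [a b]; injection E; intros; apply C_ext; simpl; lra.
Qed.

Lemma inner_addr (x y z : H) : hinner x (hadd y z) = Cadd (hinner x y) (hinner x z).
Proof. rewrite Hinner_conj, Hinner_addl, Cconj_add, <- !Hinner_conj; reflexivity. Qed.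

Lemma inner_scalr a (x y : H) : hinner x (hscal a y) = Cmul (Cconj a) (hinner x y).
Proof. rewrite Hinner_conj, Hinner_scall, (Hinner_conj x y); apply C_ext; simpl; lra. Qed.

Lemma inner_self_im (x : H) : Cim (hinner x x) = 0.
Proof. pose proof (f_equal Cim (Hinner_conj x x)); simpl in *; lra. Qed.

Definition rinner (x y : H) : R := Cre (hinner x y).

Lemma rinner_addl x y z : rinner (hadd x y) z = rinner x z + rinner y z.
Proof. unfold rinner; rewrite Hinner_addl; reflexivity. Qed.

Lemma rinner_addr x y z : rinner x (hadd y z) = rinner x y + rinner x z.
Proof. unfold rinner; rewrite inner_addr; reflexivity. Qed.

Lemma rinner_sym x y : rinner x y = rinner y x.
Proof. unfold rinner; rewrite Hinner_conj; reflexivity. Qed.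

Lemma rinner_scall r x y : rinner (hscal (RtoC r) x) y = r * rinner x y.
Proof. unfold rinner; rewrite Hinner_scall; simpl; ring. Qed.

Lemma rinner_scalr r x y : rinner x (hscal (RtoC r) y) = r * rinner x y.
Proof. unfold rinner; rewrite inner_scalr; simpl; ring. Qed.

Lemma rinner_oppl x y : rinner (hopp x) y = - rinner x y.
Proof. rewrite opp_scal, rinner_scall; ring. Qed.

Lemma rinner_subl x y z : rinner (hsub H x y) z = rinner x z - rinner y z.
Proof. unfold hsub; rewrite rinner_addl, rinner_oppl; ring. Qed.

Lemma im_inner_rinner u v : Cim (hinner u v) = rinner u (hscal Ci v).
Proof. unfold rinner; rewrite inner_scalr; simpl; ring. Qed.

Lemma norm_sq x : hnorm H x * hnorm H x = rinner x x.
Proof. apply sqrt_sqrt, Hinner_ge0. Qed.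

Lemma norm_ge0 x : 0 <= hnorm H x.
Proof. apply sqrt_pos. Qed.

(* Nonnegativity of the quadratic [t |-> rinner (u + t v) (u + t v)]. *)
Lemma cauchy_schwarz_sq u v : rinner u v * rinner u v <= rinner u u * rinner v v.
Proof.
  assert (Hq : forall t, 0 <= rinner u u + 2 * t * rinner u v + t * t * rinner v v).
  { intros t; pose proof (Hinner_ge0 (hadd u (hscal (RtoC t) v))) as P.
    change (0 <= rinner (hadd u (hscal (RtoC t) v)) (hadd u (hscal (RtoC t) v))) in P.
    rewrite rinner_addl, !rinner_addr, !rinner_scall, !rinner_scalr, (rinner_sym v u) in P; lra. }
  pose proof (Hinner_ge0 v) as Hv; pose proof (Hinner_ge0 u) as Hu.
  change (0 <= rinner v v) in Hv; change (0 <= rinner u u) in Hu.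
  destruct (Req_dec (rinner v v) 0) as [E|E].
  - destruct (Req_dec (rinner u v) 0) as [E2|E2]; [rewrite E2; nra|exfalso].
    pose proof (Hq (- (rinner u u + 1) / (2 * rinner u v))) as P; rewrite E in P.
    replace (2 * (- (rinner u u + 1) / (2 * rinner u v)) * rinner u v)
      with (- (rinner u u + 1)) in P by (field; auto); lra.
  - pose proof (Hq (- rinner u v / rinner v v)) as P.
    replace (rinner u u + 2 * (- rinner u v / rinner v v) * rinner u v
             + - rinner u v / rinner v v * (- rinner u v / rinner v v) * rinner v v)
      with ((rinner u u * rinner v v - rinner u v * rinner u v) / rinner v v) in P
      by (field; lra).
    apply Rmult_le_compat_r with (r := rinner v v) in P; [|lra].
    unfold Rdiv in P; rewrite Rmult_assoc, Rinv_l, Rmult_1_r in P by lra; lra.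
Qed.

Lemma cauchy_schwarz u v : Rabs (rinner u v) <= hnorm H u * hnorm H v.
Proof.
  pose proof (norm_ge0 u); pose proof (norm_ge0 v).
  apply Rsqr_incr_0_var; [|nra].
  rewrite <- Rsqr_abs; unfold Rsqr.
  replace (hnorm H u * hnorm H v * (hnorm H u * hnorm H v))
    with ((hnorm H u * hnorm H u) * (hnorm H v * hnorm H v)) by ring.
  rewrite !norm_sq; apply cauchy_schwarz_sq.
Qed.

Lemma norm_scal c v : hnorm H (hscal c v) = sqrt (Cre c * Cre c + Cim c * Cim c) * hnorm H v.
Proof.
  unfold hnorm; rewrite <- sqrt_mult_alt by nra; f_equal.
  rewrite Hinner_scall, inner_scalr; simpl; rewrite inner_self_im; ring.
Qed.

Lemma cauchy_schwarz_im u v : Rabs (Cim (hinner u v)) <= hnorm H u * hnorm H v.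
Proof.
  rewrite im_inner_rinner.
  replace (hnorm H v) with (hnorm H (hscal Ci v)); [apply cauchy_schwarz|].
  rewrite norm_scal; simpl; replace (0 * 0 + 1 * 1) with 1 by ring; rewrite sqrt_1; ring.
Qed.

Lemma norm_scal_le c v : hnorm H (hscal c v) <= (Rabs (Cre c) + Rabs (Cim c)) * hnorm H v.
Proof. rewrite norm_scal; apply Rmult_le_compat_r; [apply norm_ge0|apply sqrt_sum_sq_le]. Qed.

Lemma norm_opp v : hnorm H (hopp v) = hnorm H v.
Proof.
  rewrite opp_scal, norm_scal; simpl.
  replace (-1 * -1 + 0 * 0) with 1 by ring; rewrite sqrt_1; ring.
Qed.

Lemma norm_triangle x y : hnorm H (hadd x y) <= hnorm H x + hnorm H y.
Proof.
  pose proof (norm_ge0 x); pose proof (norm_ge0 y).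
  apply Rsqr_incr_0_var; [|lra]; unfold Rsqr.
  rewrite norm_sq, rinner_addl, !rinner_addr, (rinner_sym y x).
  pose proof (norm_sq x); pose proof (norm_sq y).
  pose proof (cauchy_schwarz x y); pose proof (Rle_abs (rinner x y)); nra.
Qed.

Lemma lincomb_nil_r cs : lincomb H cs nil = hzero.
Proof. destruct cs; reflexivity. Qed.

Lemma lincomb_pad cs vs :
  exists cs', length cs' = length vs /\ lincomb H cs' vs = lincomb H cs vs.
Proof.
  revert cs; induction vs as [|v vs IH]; intros cs.
  - exists nil; split; [reflexivity|rewrite !lincomb_nil_r; reflexivity].
  - destruct cs as [|c cs].
    + destruct (IH nil) as [cs' [Hl He]]; exists (C0 :: cs'); simpl; split; [auto|].
      rewrite He, scal0l; apply add0l.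
    + destruct (IH cs) as [cs' [Hl He]]; exists (c :: cs'); simpl; split; [auto|].
      rewrite He; reflexivity.
Qed.

Lemma lincomb_app cs ds vs ws : length cs = length vs ->
  lincomb H (cs ++ ds) (vs ++ ws) = hadd (lincomb H cs vs) (lincomb H ds ws).
Proof.
  revert cs; induction vs as [|v vs IH]; intros cs Hl.
  - destruct cs; [simpl; rewrite add0l; reflexivity|discriminate].
  - destruct cs as [|c cs]; [discriminate|]; simpl in *.
    rewrite IH by lia; apply Hassoc.
Qed.

Lemma lincomb_opp cs vs :
  hopp (lincomb H cs vs) = lincomb H (map (Cmul (RtoC (-1))) cs) vs.
Proof.
  revert vs; induction cs as [|c cs IH]; intros [|v vs]; simpl; try apply opp_zero.
  rewrite opp_add, IH, (opp_scal (hscal c v)), <- Hscal_mul; reflexivity.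
Qed.

Lemma in_span_add vs ws x y :
  in_span H vs x -> in_span H ws y -> in_span H (vs ++ ws) (hadd x y).
Proof.
  intros [cs ->] [ds ->]; destruct (lincomb_pad cs vs) as [cs' [Hl He]].
  exists (cs' ++ ds); rewrite lincomb_app, He; auto.
Qed.

Lemma in_span_opp vs x : in_span H vs x -> in_span H vs (hopp x).
Proof. intros [cs ->]; eexists; apply lincomb_opp. Qed.

Lemma finite_rank_add S T :
  is_finite_rank H S -> is_finite_rank H T -> is_finite_rank H (op_add H S T).
Proof.
  intros [[[HS1 HS2] [MS HMS]] [vs Hvs]] [[[HT1 HT2] [MT HMT]] [ws Hws]].
  unfold op_add; split; [split; [split|]|].
  - intros x y; rewrite HS1, HT1; apply addACA.
  - intros a x; rewrite HS2, HT2, Hscal_addr; reflexivity.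
  - exists (MS + MT); intros x; eapply Rle_trans; [apply norm_triangle|].
    pose proof (HMS x); pose proof (HMT x); lra.
  - exists (vs ++ ws); intros x; apply in_span_add; auto.
Qed.

Lemma finite_rank_opp S : is_finite_rank H S -> is_finite_rank H (op_opp H S).
Proof.
  intros [[[HS1 HS2] [MS HMS]] [vs Hvs]]; unfold op_opp; split; [split; [split|]|].
  - intros x y; rewrite HS1; apply opp_add.
  - intros a x; rewrite HS2, !opp_scal, <- !Hscal_mul; f_equal; apply C_ext; simpl; ring.
  - exists MS; intros x; rewrite norm_opp; auto.
  - exists vs; intros x; apply in_span_opp; auto.
Qed.

Lemma op_add_oppK (y c : H -> H) : op_add H (op_add H y (op_opp H c)) c = y.
Proof.
  apply functional_extensionality; intros x; unfold op_add, op_opp.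
  rewrite <- Hassoc, addNl, Hadd0; reflexivity.
Qed.

Lemma op_addK (y c : H -> H) : op_add H (op_add H y c) (op_opp H c) = y.
Proof.
  apply functional_extensionality; intros x; unfold op_add, op_opp.
  rewrite <- Hassoc, HaddN, Hadd0; reflexivity.
Qed.

Definition orthonormal (es : list H) : Prop :=
  forall i j, (i < length es)%nat -> (j < length es)%nat ->
    hinner (nth i es hzero) (nth j es hzero) = if Nat.eqb i j then C1 else C0.

Lemma inner_lincomb_orth cs vs y :
  (forall i, (i < length vs)%nat -> hinner (nth i vs hzero) y = C0) ->
  hinner (lincomb H cs vs) y = C0.
Proof.
  revert cs; induction vs as [|v vs IH]; intros [|c cs] Hv; simpl; try apply inner0l.
  rewrite Hinner_addl, Hinner_scall, IH.
  - pose proof (Hv 0%nat ltac:(simpl; lia)) as Hv0; simpl in Hv0.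
    rewrite Hv0; apply C_ext; simpl; ring.
  - intros i Hi; apply (Hv (S i)); simpl; lia.
Qed.

Lemma inner_lincomb_orthonormal cs es j :
  orthonormal es -> length cs = length es -> (j < length es)%nat ->
  hinner (lincomb H cs es) (nth j es hzero) = nth j cs C0.
Proof.
  revert cs j; induction es as [|e es IH]; intros cs j Hon Hl Hj; [simpl in Hj; lia|].
  destruct cs as [|c cs]; [discriminate|]; simpl in Hl.
  assert (Hon' : orthonormal es) by (intros i k Hi Hk; apply (Hon (S i) (S k)); simpl; lia).
  simpl lincomb; rewrite Hinner_addl, Hinner_scall.
  destruct j as [|j]; simpl nth.
  - pose proof (Hon 0%nat 0%nat ltac:(simpl; lia) ltac:(simpl; lia)) as He; simpl in He.
    rewrite He, inner_lincomb_orth; [apply C_ext; simpl; ring|].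
    intros i Hi; apply (Hon (S i) 0%nat); simpl; lia.
  - pose proof (Hon 0%nat (S j) ltac:(simpl; lia) ltac:(simpl in *; lia)) as He; simpl in He.
    rewrite He, IH by (auto; simpl in *; lia); apply C_ext; simpl; ring.
Qed.

Lemma orthonormal_norm es i : orthonormal es -> (i < length es)%nat ->
  hnorm H (nth i es hzero) = 1.
Proof. intros Hon Hi; unfold hnorm; rewrite (Hon i i Hi Hi), Nat.eqb_refl; apply sqrt_1. Qed.

Lemma orthonormal_snoc es e : orthonormal es -> hinner e e = C1 ->
  (forall j, (j < length es)%nat -> hinner e (nth j es hzero) = C0) ->
  orthonormal (es ++ e :: nil).
Proof.
  intros Hon Hee Heo i j Hi Hj; rewrite length_app in Hi, Hj; simpl in Hi, Hj.
  destruct (Nat.lt_ge_cases i (length es)) as [Hi'|Hi'];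
    destruct (Nat.lt_ge_cases j (length es)) as [Hj'|Hj'].
  - rewrite !app_nth1 by auto; apply Hon; auto.
  - rewrite app_nth1, app_nth2 by auto; replace (j - length es)%nat with 0%nat by lia; simpl.
    replace (Nat.eqb i j) with false by (symmetry; apply Nat.eqb_neq; lia).
    rewrite Hinner_conj, Heo by auto; apply C_ext; simpl; ring.
  - rewrite app_nth2, app_nth1 by auto; replace (i - length es)%nat with 0%nat by lia; simpl.
    replace (Nat.eqb i j) with false by (symmetry; apply Nat.eqb_neq; lia); auto.
  - rewrite !app_nth2 by auto; replace (i - length es)%nat with 0%nat by lia.
    replace (j - length es)%nat with 0%nat by lia; simpl.
    replace (Nat.eqb i j) with true by (symmetry; apply Nat.eqb_eq; lia); auto.
Qed.

(* Gram-Schmidt: [w - sum_j <w, e_j> e_j] is orthogonal to the [e_j] and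
   nonzero when [w] is outside their span. *)
Lemma orthogonal_residual es w : orthonormal es -> ~ in_span H es w ->
  exists u, hnorm H u > 0 /\ forall j, (j < length es)%nat -> hinner u (nth j es hzero) = C0.
Proof.
  intros Hon Hw.
  set (z := lincomb H (map (fun e => hinner w e) es) es).
  exists (hadd w (hopp z)); split.
  - destruct (Rle_lt_dec (hnorm H (hadd w (hopp z))) 0) as [Hle|]; [exfalso|auto].
    pose proof (norm_ge0 (hadd w (hopp z))); pose proof (norm_sq (hadd w (hopp z))) as Hsq.
    assert (Hu : hadd w (hopp z) = hzero).
    { apply Hinner_eq0, C_ext; [|apply inner_self_im]; unfold rinner in Hsq; simpl; nra. }
    apply Hw; exists (map (fun e => hinner w e) es); fold z.
    rewrite <- (Hadd0 w), <- (addNl z), Hassoc, Hu, add0l; reflexivity.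
  - intros j Hj; rewrite Hinner_addl, opp_scal, Hinner_scall; unfold z.
    rewrite inner_lincomb_orthonormal, (nth_map_lt _ _ hzero) by (rewrite ?length_map; auto).
    apply C_ext; simpl; ring.
Qed.

Lemma orthonormal_exists N : exists es, length es = N /\ orthonormal es.
Proof.
  induction N as [|N [es [Hl Hon]]].
  - exists nil; split; [reflexivity|intros i j Hi; simpl in Hi; lia].
  - destruct (Hinf_dim es) as [w Hw]; destruct (orthogonal_residual es w Hon Hw) as [u [Hu Huo]].
    exists (es ++ hscal (RtoC (/ hnorm H u)) u :: nil); split; [rewrite length_app, Hl; simpl; lia|].
    apply orthonormal_snoc; [exact Hon| |].
    + rewrite Hinner_scall, inner_scalr; pose proof (norm_sq u) as Hsq; unfold rinner in Hsq.
      apply C_ext; simpl; rewrite inner_self_im; [rewrite <- Hsq; field; lra|ring].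
    + intros j Hj; rewrite Hinner_scall, Huo by auto; apply C_ext; simpl; ring.
Qed.

Definition scaled_proj (es : list H) (t : R) : H -> H :=
  fun x => lincomb H (map (fun e => Cmul (RtoC t) (hinner x e)) es) es.

Lemma lincomb_map_add (f g : H -> C) es :
  hadd (lincomb H (map f es) es) (lincomb H (map g es) es) =
  lincomb H (map (fun e => Cadd (f e) (g e)) es) es.
Proof.
  induction es as [|e es IH]; simpl; [apply Hadd0|].
  rewrite addACA, IH, Hscal_addl; reflexivity.
Qed.

Lemma lincomb_map_scal a (f : H -> C) es :
  hscal a (lincomb H (map f es) es) = lincomb H (map (fun e => Cmul a (f e)) es) es.
Proof.
  induction es as [|e es IH]; simpl; [apply scal0r|].
  rewrite Hscal_addr, IH, Hscal_mul; reflexivity.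
Qed.

Lemma scaled_proj_norm_le es t x : (forall e, In e es -> hnorm H e = 1) ->
  hnorm H (scaled_proj es t x) <= INR (length es) * (2 * Rabs t) * hnorm H x.
Proof.
  unfold scaled_proj; induction es as [|e es IH]; intros Hn1.
  - simpl; unfold hnorm; rewrite inner0l; simpl; rewrite sqrt_0; lra.
  - simpl lincomb; eapply Rle_trans; [apply norm_triangle|].
    rewrite length_cons, S_INR.
    pose proof (IH (fun e' He' => Hn1 e' (or_intror He'))).
    eapply Rle_trans; [apply Rplus_le_compat_r, norm_scal_le|].
    pose proof (cauchy_schwarz x e) as Hre; pose proof (cauchy_schwarz_im x e) as Him.
    rewrite (Hn1 e (or_introl eq_refl)) in *; unfold rinner in Hre; simpl Cre; simpl Cim.
    replace (t * Cre (hinner x e) - 0 * Cim (hinner x e)) with (t * Cre (hinner x e)) by ring.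
    replace (t * Cim (hinner x e) + 0 * Cre (hinner x e)) with (t * Cim (hinner x e)) by ring.
    rewrite !Rabs_mult; pose proof (Rabs_pos t); pose proof (norm_ge0 x).
    assert (Rabs t * Rabs (Cre (hinner x e)) <= Rabs t * hnorm H x)
      by (apply Rmult_le_compat_l; lra).
    assert (Rabs t * Rabs (Cim (hinner x e)) <= Rabs t * hnorm H x)
      by (apply Rmult_le_compat_l; lra).
    nra.
Qed.

Lemma scaled_proj_finite_rank es t : orthonormal es -> is_finite_rank H (scaled_proj es t).
Proof.
  intros Hon; split; [split; [split|]|].
  - intros x y; unfold scaled_proj; rewrite lincomb_map_add; f_equal.
    apply map_ext; intros e; rewrite Hinner_addl; apply C_ext; simpl; ring.
  - intros a x; unfold scaled_proj; rewrite lincomb_map_scal; f_equal.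
    apply map_ext; intros e; rewrite Hinner_scall; apply C_ext; simpl; ring.
  - exists (INR (length es) * (2 * Rabs t)); intros x; apply scaled_proj_norm_le.
    intros e He; destruct (In_nth es e hzero He) as [i [Hi <-]]; apply orthonormal_norm; auto.
  - exists es; intros x; eexists; reflexivity.
Qed.

Lemma rinner_scaled_proj es t k l : orthonormal es ->
  (k < length es)%nat -> (l < length es)%nat ->
  rinner (scaled_proj es t (nth k es hzero)) (nth l es hzero) = if Nat.eqb k l then t else 0.
Proof.
  intros Hon Hk Hl; unfold rinner, scaled_proj.
  rewrite inner_lincomb_orthonormal, (nth_map_lt _ _ hzero), Hon by (rewrite ?length_map; auto).
  destruct (Nat.eqb k l); simpl; ring.
Qed.

Lemma rinner_lincomb cs vs y : length cs = length vs ->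
  rinner (lincomb H cs vs) y =
  rsum (length vs) (fun p => Cre (nth p cs C0) * rinner (nth p vs hzero) y
                             - Cim (nth p cs C0) * Cim (hinner (nth p vs hzero) y)).
Proof.
  revert cs; induction vs as [|v vs IH]; intros [|c cs] Hl; try discriminate.
  - unfold rinner; simpl; rewrite inner0l; reflexivity.
  - simpl in Hl; simpl length; rewrite rsum_shift; simpl lincomb.
    rewrite rinner_addl, IH by lia; unfold rinner at 1; rewrite Hinner_scall; reflexivity.
Qed.

Definition sum_norms (xs : list H) : R := fold_right (fun y acc => hnorm H y + acc) 0 xs.

Lemma sum_norms_ge0 xs : 0 <= sum_norms xs.
Proof. induction xs as [|x xs IH]; simpl; [lra|pose proof (norm_ge0 x); lra]. Qed.

Lemma norm_le_sum_norms xs x : In x xs -> hnorm H x <= sum_norms xs.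
Proof.
  induction xs as [|y xs IH]; simpl; [tauto|].
  pose proof (sum_norms_ge0 xs); pose proof (norm_ge0 y).
  intros [->|Hin]; [lra|pose proof (IH Hin); lra].
Qed.

Lemma div_succ_mul_lt eps L a : eps > 0 -> 0 <= a <= L -> eps / (1 + L) * a < eps.
Proof.
  intros Heps Ha.
  apply Rle_lt_trans with (eps / (1 + L) * L); [apply Rmult_le_compat_l; [|lra]|].
  - left; apply Rdiv_lt_0_compat; lra.
  - replace (eps / (1 + L) * L) with (eps - eps / (1 + L)) by (field; lra).
    assert (0 < eps / (1 + L)) by (apply Rdiv_lt_0_compat; lra); lra.
Qed.

Lemma sot_open_norm_open U : sot_open H U -> norm_open H U.
Proof.
  intros [HUb HU]; split; [exact HUb|intros T HT].
  destruct (HU T HT) as [xs [eps [Heps Hall]]].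
  pose proof (sum_norms_ge0 xs).
  exists (eps / (1 + sum_norms xs)); split; [apply Rdiv_lt_0_compat; lra|].
  intros S HS Hclose; apply Hall; [exact HS|intros x Hx].
  eapply Rle_lt_trans; [apply Hclose|apply div_succ_mul_lt; [exact Heps|split]].
  - apply norm_ge0.
  - apply norm_le_sum_norms, Hx.
Qed.

Definition real_gram (T : H -> H) (e : nat -> H) : nat -> nat -> R :=
  fun k l => rinner (T (e k)) (e l).

Definition real_rank_ge (m : nat) (T : H -> H) : Prop :=
  is_bounded_op H T /\ exists K (e : nat -> H) (Cm Dm : nat -> nat -> R),
    near_id m (mmul K (mmul K Cm (real_gram T e)) Dm).

Definition low_rank (m : nat) (T : H -> H) : Prop :=
  is_finite_rank H T /\ ~ real_rank_ge m T.

Lemma real_rank_ge_sot_open m : sot_open H (real_rank_ge m).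
Proof.
  split; [intros T [HT _]; exact HT|intros T [HT [K [e [Cm [Dm Hn]]]]]].
  destruct (near_id_perturb m K Cm (real_gram T e) Dm Hn) as [eps [Heps Hpert]].
  set (xs := map e (seq 0 K)); pose proof (sum_norms_ge0 xs).
  exists xs, (eps / (1 + sum_norms xs)); split; [apply Rdiv_lt_0_compat; lra|].
  intros S HS Hclose; split; [exact HS|exists K, e, Cm, Dm; apply Hpert].
  intros k l Hk Hl; unfold real_gram; rewrite <- rinner_subl.
  assert (Hin : forall i, (i < K)%nat -> In (e i) xs) by (intros i Hi; apply in_map, in_seq; lia).
  eapply Rle_trans; [apply cauchy_schwarz|left].
  eapply Rle_lt_trans; [|apply (div_succ_mul_lt eps (sum_norms xs) (hnorm H (e l)) Heps)].
  - apply Rmult_le_compat_r; [apply norm_ge0|left; apply Hclose; auto].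
  - split; [apply norm_ge0|apply norm_le_sum_norms; auto].
Qed.

(* If the range of [T] lies in the span of [n] vectors, then every real Gram
   matrix of [T] factors through [R^(2n)] (real and imaginary parts). *)
Lemma finite_rank_low_rank T : is_finite_rank H T -> exists m, low_rank m T.
Proof.
  intros [HTb [vs Hvs]]; set (n := length vs); exists (n + n + 1)%nat.
  split; [split; [exact HTb|exists vs; exact Hvs]|intros [_ [K [e [Cm [Dm Hn]]]]]].
  assert (Hc : forall i, {cs | length cs = n /\ T (e i) = lincomb H cs vs}).
  { intros i; apply constructive_indefinite_description.
    destruct (Hvs (e i)) as [cs0 ->]; destruct (lincomb_pad cs0 vs) as [cs [Hl He]].
    exists cs; auto. }
  set (cs := fun i => proj1_sig (Hc i)).
  set (P := fun i p => if Nat.ltb p n then Cre (nth p (cs i) C0)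
                       else - Cim (nth (p - n) (cs i) C0)).
  set (Q := fun p j => if Nat.ltb p n then rinner (nth p vs hzero) (e j)
                       else Cim (hinner (nth (p - n) vs hzero) (e j))).
  apply (RealMatrix.factored_not_near_id (n + n + 1) (n + n) K Cm (real_gram T e) P Q Dm);
    [lia| |exact Hn].
  intros i j _ _; unfold real_gram.
  rewrite (proj2 (proj2_sig (Hc i))), rinner_lincomb by apply (proj2_sig (Hc i)).
  fold n; rewrite rsum_split, <- rsum_plus; apply rsum_ext; intros p Hp.
  unfold P, Q; replace (Nat.ltb p n) with true by (symmetry; apply Nat.ltb_lt; auto).
  replace (Nat.ltb (n + p) n) with false by (symmetry; apply Nat.ltb_ge; lia).
  replace (n + p - n)%nat with p by lia; unfold cs; ring.
Qed.

(* [(y - t P) - (y - s P) = (s - t) P] with [P] of rank [2m], so one of the two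
   has real rank at least [m]. *)
Lemma low_rank_translates_disjoint m es t s y : length es = (2 * m)%nat -> orthonormal es ->
  t <> s -> ~ (low_rank m (op_add H y (op_opp H (scaled_proj es t))) /\
                low_rank m (op_add H y (op_opp H (scaled_proj es s)))).
Proof.
  intros Hl Hon Hts [[Fa Ga] [Fb Gb]].
  set (e := fun k => nth k es hzero).
  set (gram := fun r => real_gram (op_add H y (op_opp H (scaled_proj es r))) e).
  assert (Hgram : forall r k l, (k < 2 * m)%nat -> (l < 2 * m)%nat ->
             gram r k l = rinner (y (e k)) (e l) - (if Nat.eqb k l then r else 0)).
  { intros r k l Hk Hl'; unfold gram, real_gram, op_add, op_opp, e.
    rewrite rinner_addl, rinner_oppl, rinner_scaled_proj by (auto; lia); ring. }
  assert (Hst : s - t <> 0) by lra.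
  destruct (RealMatrix.scalar_gap_near_id m (2 * m) (gram t) (gram s) (s - t) (le_n _) Hst)
    as [[Cm [Dm Hn]]|[Cm [Dm Hn]]].
  - intros i Hi; rewrite !Hgram, Nat.eqb_refl by lia; ring.
  - intros i j Hi Hj Hij; rewrite !Hgram by lia.
    replace (Nat.eqb i j) with false by (symmetry; apply Nat.eqb_neq; exact Hij); ring.
  - apply Ga; split; [apply Fa|exists (2 * m)%nat, e, Cm, Dm; exact Hn].
  - apply Gb; split; [apply Fb|exists (2 * m)%nat, e, Cm, Dm; exact Hn].
Qed.

Lemma low_rank_borel (op : ((H -> H) -> Prop) -> Prop) m :
  (forall U, sot_open H U -> op U) ->
  trace_borel (is_finite_rank H) (is_bounded_op H) op (low_rank m).
Proof.
  intros Hop; exists (fun T => is_bounded_op H T /\ ~ real_rank_ge m T); split.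
  - intros Sg [_ [_ [Hcompl _]]] HopSg; apply Hcompl, HopSg, Hop, real_rank_ge_sot_open.
  - intros T; split; [intros [Hf Hg]; split; [split; [apply Hf|exact Hg]|exact Hf]|].
    intros [[_ Hg] Hf]; split; assumption.
Qed.

Lemma Bf_not_polishable_of_sot_finer (op : ((H -> H) -> Prop) -> Prop) :
  (forall U, sot_open H U -> op U) -> ~ Bf_polishable H op.
Proof.
  intros Hop [tau [Hpolish Hborel]].
  assert (Hes : forall m, { es | length es = (2 * m)%nat /\ orthonormal es })
    by (intros m; apply constructive_indefinite_description, orthonormal_exists).
  set (es := fun m => proj1_sig (Hes m)).
  destruct (polish_group_borel_cover_translates (H -> H) (is_finite_rank H) (op_add H) (op_opp H)
              tau low_rank (fun m => scaled_proj (es m))) as (m & t & s & y & Hts & _ & Ht & Hs).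
  - exact Hpolish.
  - apply finite_rank_add.
  - apply finite_rank_opp.
  - intros y c _ _; apply op_add_oppK.
  - intros y c _ _; apply op_addK.
  - intros m; apply Hborel, low_rank_borel, Hop.
  - exact finite_rank_low_rank.
  - intros m t; apply scaled_proj_finite_rank, (proj2_sig (Hes m)).
  - exact (low_rank_translates_disjoint m (es m) t s y
             (proj1 (proj2_sig (Hes m))) (proj2 (proj2_sig (Hes m))) Hts (conj Ht Hs)).
Qed.
End InnerProductSpace.

Theorem mainTheorem11 (H : PreHilbert) (hH : is_inf_dim_sep_Hilbert H) :
  ~ Bf_polishable H (@norm_open H) /\ ~ Bf_polishable H (@sot_open H).
Proof.
  destruct hH as (Hassoc & Hcomm & Hadd0 & HaddN & Hscal1 & Hscal_mul & Hscal_addr & Hscal_addl &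
                  Hinner_addl & Hinner_scall & Hinner_conj & Hinner_ge0 & Hinner_eq0 & _ & _ & Hinf).
  split; apply Bf_not_polishable_of_sot_finer; auto.
  intros U HU; apply sot_open_norm_open; auto.
Qed.
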